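(* In the setting described in the context, let $F$ be strongly convex with respect to $\|\cdot\|_L$ with convexity parameter $\mu>0$, and choose accuracy $\epsilon>0$, confidence $0<\rho<1$, and $$k\geq\frac{n}{1-\gamma_\mu}\log\left(\frac{F(x_0)-F^*}{\rho\epsilon}\right),$$ where $\gamma_\mu=1-\frac\mu4$ if $\mu\leq2$ and $\gamma_\mu=\frac1\mu$ otherwise. If $x_k$ is the random point generated by UCDC$(x_0)$, then $\mathbf{P}(F(x_k)-F^*\leq\epsilon)\geq1-\rho$.
   Context: Let $U\in\mathbf{R}^{N\times N}$ be a column permutation of the $N\times N$ identity matrix, partitioned as $U=[U_1,\dots,U_n]$ with $U_i\in\mathbf{R}^{N\times N_i}$, $\sum_iN_i=N$. For $x\in\mathbf{R}^N$ write $x^{(i)}=U_i^Tx$. Each $\mathbf{R}^{N_i}$ carries the norm $\|t\|_{(i)}=\langle B_it,t\rangle^{1/2}$ and dual norm $\|t\|_{(i)}^*=\langle B_i^{-1}t,t\rangle^{1/2}$ with $B_i$ positive definite. Consider minimizing $F(x)=f(x)+\Psi(x)$ over $\mathbf{R}^N$, where $f$ is convex and differentiable with $\|\nabla_if(x+U_it)-\nabla_if(x)\|_{(i)}^*\leq L_i\|t\|_{(i)}$ for all $x,t,i$ (constants $L_i>0$, $\nabla_if(x)=U_i^T\nabla f(x)$), and $\Psi(x)=\sum_i\Psi_i(x^{(i)})$ with each $\Psi_i$ proper closed convex. The problem has a minimizer; $F^*$ is the optimal value. Let $\|x\|_L=(\sum_iL_i\|x^{(i)}\|_{(i)}^2)^{1/2}$.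 Strong convexity w.r.t. $\|\cdot\|_L$ with parameter $\mu$: $F(x)\geq F(y)+\langle F'(y),x-y\rangle+\frac\mu2\|x-y\|_L^2$ for all $x,y\in\mathrm{dom}\,F$ and all subgradients $F'(y)$. Algorithm UCDC$(x_0)$: for $k=0,1,2,\dots$, choose $i\in\{1,\dots,n\}$ uniformly at random (independently), compute $T^{(i)}(x_k)=\arg\min_{t\in\mathbf{R}^{N_i}}\{\langle\nabla_if(x_k),t\rangle+\frac{L_i}{2}\|t\|_{(i)}^2+\Psi_i(x_k^{(i)}+t)\}$ and set $x_{k+1}=x_k+U_iT^{(i)}(x_k)$. *)

From HB Require Import structures.
From mathcomp Require Import all_boot all_order all_algebra.
From mathcomp Require Import all_classical all_reals all_analysis.
Unset Printing Implicit Defensive.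
Import Order.TTheory GRing.Theory Num.Theory.
Import numFieldNormedType.Exports.
Local Open Scope ring_scope.

Section UCDC.
Context {R : realType}.
Context {n : nat}.
Context {Ns : 'I_n -> nat}.

Definition Ntot : nat := (\sum_(i < n) Ns i)%N.
Notation vec := 'cV[R]_Ntot.

Definition inner {m} (a b : 'cV[R]_m) : R := (a^T *m b) 0 0.

Definition posdef {m} (B : 'M[R]_m) : Prop :=
  B^T = B /\ forall t : 'cV[R]_m, t != 0 -> 0 < inner (B *m t) t.

Definition bnorm {m} (B : 'M[R]_m) (t : 'cV[R]_m) : R := Num.sqrt (inner (B *m t) t).
Definition bdnorm {m} (B : 'M[R]_m) (t : 'cV[R]_m) : R :=
  Num.sqrt (inner (invmx B *m t) t).

(* U_i : the i-th column block of U (an N x N_i matrix) *)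
Definition blkU (U : 'M[R]_Ntot) (i : 'I_n) : 'M[R]_(Ntot, Ns i) :=
  @submxrow R n Ns Ntot U i.

Definition blk (U : 'M[R]_Ntot) (x : vec) (i : 'I_n) : 'cV[R]_(Ns i) :=
  (blkU U i)^T *m x.

Definition grad (f : vec -> R) (x : vec) : vec :=
  \col_(j < Ntot) ('D_(delta_mx j (0 : 'I_1)) f x).

Definition bgrad (U : 'M[R]_Ntot) (f : vec -> R) (i : 'I_n) (x : vec)
  : 'cV[R]_(Ns i) := (blkU U i)^T *m grad f x.

Definition convex_fun {m} (g : 'cV[R]_m -> R) : Prop :=
  forall (x y : 'cV[R]_m) (l : R), 0 <= l <= 1 ->
    g (l *: x + (1 - l) *: y) <= l * g x + (1 - l) * g y.

Definition proper_fun {m} (g : 'cV[R]_m -> \bar R) : Prop :=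
  (forall t, g t != -oo%E) /\ exists t, (g t < +oo)%E.

Definition convex_efun {m} (g : 'cV[R]_m -> \bar R) : Prop :=
  forall (x y : 'cV[R]_m) (l : R), 0 <= l <= 1 ->
    (g (l *: x + (1 - l) *: y)%R <= l%:E * g x + (1 - l)%:E * g y)%E.

Definition closed_fun {m} (g : 'cV[R]_m -> \bar R) : Prop :=
  lower_semicontinuous g.

Definition Fobj (U : 'M[R]_Ntot) (f : vec -> R)
  (Psi : forall i : 'I_n, 'cV[R]_(Ns i) -> \bar R) (x : vec) : \bar R :=
  ((f x)%:E + \sum_(i < n) Psi i (blk U x i))%E.

Definition Fstar (F : vec -> \bar R) : \bar R := ereal_inf (range F).

Definition Lnorm (U : 'M[R]_Ntot) (B : forall i : 'I_n, 'M[R]_(Ns i))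
  (L : 'I_n -> R) (x : vec) : R :=
  Num.sqrt (\sum_(i < n) L i * bnorm (B i) (blk U x i) ^+ 2).

Definition subgrad (F : vec -> \bar R) (y g : vec) : Prop :=
  forall z, (F y + (inner g (z - y)%R)%:E <= F z)%E.

Definition domF (F : vec -> \bar R) : set vec := [set x | (F x < +oo)%E].

Definition strongly_convex_L (U : 'M[R]_Ntot) (B : forall i : 'I_n, 'M[R]_(Ns i))
  (L : 'I_n -> R) (F : vec -> \bar R) (mu : R) : Prop :=
  forall x y, domF F x -> domF F y -> forall g, subgrad F y g ->
    (F y + (inner g (x - y)%R + mu / 2 * Lnorm U B L (x - y)%R ^+ 2)%R%:E <= F x)%E.

(* objective of the block subproblem defining T^(i)(x) *)
Definition Vobj (U : 'M[R]_Ntot) (f : vec -> R) (B : forall i : 'I_n, 'M[R]_(Ns i))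
  (L : 'I_n -> R) (Psi : forall i : 'I_n, 'cV[R]_(Ns i) -> \bar R)
  (i : 'I_n) (x : vec) (t : 'cV[R]_(Ns i)) : \bar R :=
  ((inner (bgrad U f i x) t + L i / 2 * bnorm (B i) t ^+ 2)%:E
     + Psi i (blk U x i + t)%R)%E.

Definition ucdc_step (U : 'M[R]_Ntot) (T : forall i : 'I_n, vec -> 'cV[R]_(Ns i))
  (x : vec) (i : 'I_n) : vec := x + blkU U i *m T i x.

Definition ucdc (U : 'M[R]_Ntot) (T : forall i : 'I_n, vec -> 'cV[R]_(Ns i))
  (x0 : vec) (w : seq 'I_n) : vec := foldl (ucdc_step U T) x0 w.

(* P(event on x_k), with i_0,...,i_{k-1} i.i.d. uniform on {1..n}:
   each choice sequence in 'I_n^k has probability n^-k *)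
Definition prob_k {k : nat} (P : k.-tuple 'I_n -> bool) : R :=
  (#|[set w : k.-tuple 'I_n | P w]|)%:R / (n ^ k)%:R.

Definition gamma_mu (mu : R) : R := if mu <= 2 then 1 - mu / 4 else mu^-1.

End UCDC.
Arguments Ntot {n} Ns.

(* At a point x with F x < +oo, sampling the block i uniformly and comparing the
   block step T^(i)(x) with the partial move of length l towards a minimiser x^*
   (the descent lemma for f along the block, convexity of f and of the Psi_i, and
   the orthogonality of the blocks of U) gives
     E[F(x+) - F^*] <= (1 - (1 - gamma_mu)/n) (F(x) - F^* ),
   once l = min(mu/2, 1) is chosen so that strong convexity absorbs the quadratic
   term.  Iterating over the n^k equally likely choice sequences bounds the
   expected gap after k steps by (1 - (1 - gamma_mu)/n)^k (F(x0) - F^* ), which the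
   choice of k makes at most rho eps; Markov's inequality concludes. *)

From Pilot Require Import Defs.
From HB Require Import structures.
From mathcomp Require Import all_boot all_order all_algebra.
From mathcomp Require Import all_classical all_reals all_analysis.
From mathcomp Require Import perm ring lra.
Import Order.TTheory GRing.Theory Num.Theory.
Import numFieldNormedType.Exports.
Local Open Scope ring_scope.

Section InnerProduct.
Context {R : realType} {m : nat}.
Implicit Types a b c : 'cV[R]_m.

Lemma innerDl a b c : inner (a + b) c = inner a c + inner b c.
Proof. by rewrite /inner linearD mulmxDl mxE. Qed.

Lemma innerDr a b c : inner a (b + c) = inner a b + inner a c.
Proof. by rewrite /inner mulmxDr mxE. Qed.

Lemma innerZl k a b : inner (k *: a) b = k * inner a b.
Proof. by rewrite /inner linearZ /= -scalemxAl mxE. Qed.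

Lemma innerZr k a b : inner a (k *: b) = k * inner a b.
Proof. by rewrite /inner -scalemxAr mxE. Qed.

Lemma innerNl a b : inner (- a) b = - inner a b.
Proof. by rewrite -scaleN1r innerZl mulN1r. Qed.

Lemma innerNr a b : inner a (- b) = - inner a b.
Proof. by rewrite -scaleN1r innerZr mulN1r. Qed.

Lemma innerBl a b c : inner (a - b) c = inner a c - inner b c.
Proof. by rewrite innerDl innerNl. Qed.

Lemma inner0l a : inner 0 a = 0.
Proof. by rewrite /inner linear0 mul0mx mxE. Qed.

Lemma inner0r a : inner a 0 = 0.
Proof. by rewrite /inner mulmx0 mxE. Qed.

Lemma innerC a b : inner a b = inner b a.
Proof. by rewrite /inner !mxE; apply: eq_bigr => i _; rewrite !mxE mulrC. Qed.

Lemma inner_mulmxl k (A : 'M[R]_(m, k)) (a : 'cV_k) b :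
  inner (A *m a) b = inner a (A^T *m b).
Proof. by rewrite /inner trmx_mul mulmxA. Qed.

Lemma inner_sumr (I : finType) a (b : I -> 'cV[R]_m) :
  inner a (\sum_i b i) = \sum_i inner a (b i).
Proof. by rewrite /inner mulmx_sumr summxE. Qed.

Lemma posdef_ge0 {B : 'M[R]_m} t : posdef B -> 0 <= inner (B *m t) t.
Proof.
case=> _ Bpos; have [->|t0] := eqVneq t 0; first by rewrite inner0r.
exact/ltW/Bpos.
Qed.

Lemma posdef_unitmx (B : 'M[R]_m) : posdef B -> B \in unitmx.
Proof.
case=> Bsym Bpos; rewrite unitmxE unitfE; apply/negP => /det0P[v v0 vB].
have vT0 : v^T != 0 by rewrite trmx_eq0.
have := Bpos _ vT0.
have -> : B *m v^T = 0 by rewrite -{1}Bsym -trmx_mul vB linear0.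
by rewrite inner0l ltxx.
Qed.

Lemma bnorm_ge0 (B : 'M[R]_m) t : 0 <= bnorm B t.
Proof. exact: sqrtr_ge0. Qed.

Lemma bnormZ (B : 'M[R]_m) k t : 0 <= k -> bnorm B (k *: t) = k * bnorm B t.
Proof.
move=> k0; rewrite /bnorm -scalemxAr innerZl innerZr mulrA -expr2.
by rewrite sqrtrM ?sqr_ge0 // sqrtr_sqr ger0_norm.
Qed.

(* Positivity of the quadratic s |-> <B (t - s c), t - s c> with c = B^-1 a. *)
Lemma inner_le_bdnorm_bnorm (B : 'M[R]_m) a t :
  posdef B -> inner a t <= bdnorm B a * bnorm B t.
Proof.
move=> Bpd; have [Bsym Bpos] := Bpd.
set c := invmx B *m a.
have Bc : B *m c = a by rewrite mulKVmx // posdef_unitmx.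
set p := inner a t; set qt := inner (B *m t) t; set qa := inner (invmx B *m a) a.
have qt_ge0 : 0 <= qt by exact: posdef_ge0.
have qaE : qa = inner (B *m c) c by rewrite Bc innerC.
have qa_ge0 : 0 <= qa by rewrite qaE; exact: posdef_ge0.
have quad_ge0 s : 0 <= qt - 2 * s * p + s ^+ 2 * qa.
  have := posdef_ge0 (t - s *: c) Bpd.
  rewrite mulmxDr mulmxN -scalemxAr Bc !innerDl !innerDr !innerNl !innerNr.
  rewrite !innerZl !innerZr -/qt.
  have -> : inner (B *m t) c = p by rewrite inner_mulmxl Bsym Bc innerC.
  rewrite qaE Bc -/p; lra.
have p_sqr : p ^+ 2 <= qa * qt.
  have [qa0|qa_neq0] := eqVneq qa 0.
    have c0 : c = 0.
      apply/eqP/negPn/negP => /Bpos.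
      by rewrite Bc innerC -/qa qa0 ltxx.
    by rewrite /p -Bc c0 mulmx0 inner0l qa0 expr0n /= mul0r.
  have qa_gt0 : 0 < qa by rewrite lt_neqAle eq_sym qa_neq0.
  have := quad_ge0 (p / qa).
  have -> : qt - 2 * (p / qa) * p + (p / qa) ^+ 2 * qa = qt - p ^+ 2 / qa.
    by field; rewrite qa_neq0.
  by rewrite subr_ge0 ler_pdivrMr // mulrC.
rewrite /bdnorm /bnorm -/qa -/qt -sqrtrM //.
apply: le_trans (ler_norm p) _.
by rewrite -sqrtr_sqr ler_wsqrtr.
Qed.

End InnerProduct.

Lemma perm_mx_orthogonal {R : pzRingType} {m} {P : 'M[R]_m} :
  is_perm_mx P -> P^T *m P = 1%:M /\ P *m P^T = 1%:M.
Proof.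
case/is_perm_mxP => s ->; rewrite tr_perm_mx -!perm_mxM.
by rewrite mulVg mulgV perm_mx1.
Qed.

Section PermutationBlocks.
Context {R : realType} {n : nat} {Ns : 'I_n -> nat}.
Variable U : 'M[R]_(Ntot Ns).
Hypothesis U_perm : is_perm_mx U.

Lemma trblkU_mul_blkU i j : (blkU U i)^T *m blkU U j = submxblock (U^T *m U) i j.
Proof.
by rewrite submxblockEh -mul_submxrow -submxcol_mul /blkU tr_submxrow.
Qed.

Lemma trblkU_mul_blkU_id i : (blkU U i)^T *m blkU U i = 1%:M.
Proof.
rewrite trblkU_mul_blkU (perm_mx_orthogonal U_perm).1.
by rewrite -(mxdiagZ (p_:=Ns) 1) submxblock_diag.
Qed.

Lemma trblkU_mul_blkU_eq0 i j : i != j -> (blkU U i)^T *m blkU U j = 0.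
Proof.
move=> ij; rewrite trblkU_mul_blkU (perm_mx_orthogonal U_perm).1.
by rewrite -(mxdiagZ (p_:=Ns) 1) /mxdiag mxblockK (negbTE ij).
Qed.

Lemma sum_blkU_mul_trblkU : \sum_i (blkU U i *m (blkU U i)^T) = 1%:M.
Proof.
rewrite -mul_mxrow_mxcol -tr_mxrow submxrowK.
exact: (perm_mx_orthogonal U_perm).2.
Qed.

Lemma blkD x y j : blk U (x + y) j = blk U x j + blk U y j.
Proof. by rewrite /blk mulmxDr. Qed.

Lemma blkN x j : blk U (- x) j = - blk U x j.
Proof. by rewrite /blk mulmxN. Qed.

Lemma blk_move_same x i t : blk U (x + blkU U i *m t) i = blk U x i + t.
Proof. by rewrite /blk mulmxDr mulmxA trblkU_mul_blkU_id mul1mx. Qed.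

Lemma blk_move_other x i j t : j != i -> blk U (x + blkU U i *m t) j = blk U x j.
Proof. by move=> ji; rewrite /blk mulmxDr mulmxA trblkU_mul_blkU_eq0 // mul0mx addr0. Qed.

Lemma sum_inner_blk g d :
  \sum_i inner ((blkU U i)^T *m g) ((blkU U i)^T *m d) = inner g d.
Proof.
under eq_bigr do rewrite inner_mulmxl trmxK mulmxA.
by rewrite -inner_sumr -mulmx_suml sum_blkU_mul_trblkU mul1mx.
Qed.

End PermutationBlocks.

Section Smooth.
Local Open Scope classical_set_scope.
Local Open Scope ring_scope.
Context {R : realType} {n : nat} {Ns : 'I_n -> nat} {f : 'cV[R]_(Ntot Ns) -> R}.
Hypothesis f_diff : forall x, differentiable f x.

Lemma diff_inner_grad x v : 'd f x v = inner (grad f x) v.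
Proof.
rewrite /inner /grad mxE {1}(matrix_sum_delta v) linear_sum /=.
apply: eq_bigr => i _; rewrite big_ord1 linearZ /= !mxE deriveE //.
by rewrite mulrC.
Qed.

Lemma is_derive_along x v s :
  is_derive s (1 : R) (fun s => f (x + s *: v)) ('d f (x + s *: v) v).
Proof.
have shiftE : (fun h : R => h^-1 *: (((fun s => f (x + s *: v)) \o shift s) (h *: 1)
                                      - f (x + s *: v)))
   = (fun h : R => h^-1 *: ((f \o shift (x + s *: v)) (h *: v) - f (x + s *: v))).
  apply/funext => h /=.
  have -> : h%:A = h by rewrite /GRing.scale /= mulr1.
  by rewrite scalerDl addrCA.
split; first by rewrite /derivable shiftE; exact: diff_derivable.
by rewrite /derive shiftE -/(derive f (x + s *: v) v) deriveE.
Qed.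

(* Mean value argument for phi(s) = f(x + s v) - s c - K s^2, whose derivative
   is nonpositive on ]0, 1[. *)
Lemma le_of_slope_bound x v c K :
  (forall s, 0 < s < 1 -> inner (grad f (x + s *: v)) v - c <= 2 * K * s) ->
  f (x + v) <= f x + c + K.
Proof.
move=> slope.
pose phi := fun s : R => f (x + s *: v) - s * c - K * s ^+ 2.
have phi_der s : is_derive s (1 : R) phi ('d f (x + s *: v) v - c - K * (2 * s)).
  have dlin : is_derive s (1 : R) (c \*: (@id R)) (c *: 1) by exact: is_deriveZ.
  have dsqr : is_derive s (1 : R) (K \*: ((@id R) ^+ 2)) (K *: ((2%:R * s ^+ 1) *: 1)).
    exact: is_deriveZ.
  have := is_deriveB (is_deriveB (is_derive_along x v s) dlin) dsqr.
  have -> : phi = ((fun s => f (x + s *: v)) - c \*: (@id R)) - K \*: ((@id R) ^+ 2).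
    by apply/funext => r; rewrite /phi /= [r * c]mulrC.
  by move/is_derive_eq; apply; rewrite /GRing.scale /= !mulr1 expr1.
have phi_dv s : derivable phi s 1 by case: (phi_der s).
have phi'_le0 (s : R) : s \in `]0, 1[ -> derive1 phi s <= 0.
  rewrite in_itv /= => /andP[s_gt0 s_lt1].
  rewrite derive1E (@derive_val _ _ _ _ _ _ _ (phi_der s)) diff_inner_grad.
  have := slope s; rewrite s_gt0 s_lt1 => /(_ isT); lra.
have phi_cont : {within `[0, 1], continuous phi}.
  apply: continuous_subspaceT => s.
  by apply: differentiable_continuous; apply/derivable1_diffP.
have in01 (r : R) : r = 0 \/ r = 1 -> r \in `[0, 1].
  by case=> ->; rewrite in_itv /= lexx ler01.
have := @ler0_derive1_le_cc R phi 0 1 (fun s _ => phi_dv s) phi'_le0 phi_cont 1 0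
  (in01 _ (or_intror erefl)) (in01 _ (or_introl erefl)) ler01.
rewrite /phi !scale0r !scale1r addr0 !mul0r !mul1r expr0n /= expr1n.
rewrite mulr0 mulr1 !subr0; lra.
Qed.

Lemma convex_grad_ineq : convex_fun f ->
  forall x y, f x + inner (grad f x) (y - x) <= f y.
Proof.
move=> f_conv x y; set d := y - x.
have /cvg_dnbhs_at_right f'x : derivable f x d by exact: diff_derivable.
have dir_le : 'D_d f x <= f y - f x.
  apply: (cvgr_to_le f'x); exists 1 => //= h /= h_near h_gt0.
  have h_lt1 : h < 1 by move: h_near; rewrite /ball /= sub0r normrN gtr0_norm.
  have := f_conv y x h; rewrite (ltW h_gt0) (ltW h_lt1) => /(_ isT) f_conv_h.
  have -> : h *: d + x = h *: y + (1 - h) *: x.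
    by rewrite /d scalerBr scalerBl scale1r addrC addrA [x + _]addrC addrA.
  rewrite [_ *: _]/(GRing.scale _ _) /= -[X in X <= _]/(h^-1 * _).
  rewrite ler_pdivrMl //; lra.
by rewrite -diff_inner_grad -deriveE //; lra.
Qed.

End Smooth.

Lemma sum_tuple_cons (V : nmodType) (I : finType) k (G : k.+1.-tuple I -> V) :
  \sum_(w : k.+1.-tuple I) G w = \sum_(i : I) \sum_(w : k.-tuple I) G [tuple of i :: w].
Proof.
rewrite pair_big /=.
rewrite (reindex (fun p : I * k.-tuple I => [tuple of p.1 :: p.2])) //=.
exists (fun w : k.+1.-tuple I => (thead w, [tuple of behead w])).
  by move=> [i w] _ /=; congr pair; apply: val_inj.
by move=> w _; rewrite [RHS]tuple_eta.
Qed.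

Lemma markov_card {R : realFieldType} {I : finType} {g : I -> R} eps :
  (forall w, 0 <= g w) -> #|[set w | ~~ (g w <= eps)]|%:R * eps <= \sum_w g w.
Proof.
move=> g_ge0; rewrite mulr_natl -sumr_const.
apply: (@le_trans _ _ (\sum_(w in [set w | ~~ (g w <= eps)]) g w)).
  by apply: ler_sum => w; rewrite inE -ltNge => /ltW.
by rewrite big_mkcond /=; apply: ler_sum => w _; case: ifP.
Qed.

Lemma prob_k_markov (R : realType) n k (g : k.-tuple 'I_n -> R) eps rho :
  (0 < n)%N -> 0 < eps -> (forall w, 0 <= g w) ->
  \sum_w g w <= (n ^ k)%:R * (rho * eps) ->
  1 - rho <= prob_k (fun w => g w <= eps).
Proof.
move=> n_gt0 eps_gt0 g_ge0 mean_le.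
set good := [set w | g w <= eps]; set bad := [set w | ~~ (g w <= eps)].
have nk_gt0 : (0 : R) < (n ^ k)%:R by rewrite ltr0n expn_gt0 n_gt0.
have card_good : #|good|%:R = (n ^ k)%:R - #|bad|%:R :> R.
  have -> : bad = ~: good by apply/setP => w; rewrite !inE.
  by have := cardsC good; rewrite card_tuple card_ord => <-; rewrite natrD addrK.
have bad_le : #|bad|%:R <= (n ^ k)%:R * rho :> R.
  rewrite -(ler_pM2r eps_gt0) -mulrA.
  exact: le_trans (markov_card eps g_ge0) mean_le.
by rewrite /prob_k -/good card_good ler_pdivlMr //; lra.
Qed.

Lemma expn_contraction_le (R : realType) (a c phi r : R) k :
  0 < a <= c -> 0 <= phi -> 0 < r -> c / a * ln (phi / r) <= k%:R ->
  (c - a) ^+ k * phi <= c ^+ k * r.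
Proof.
move=> /andP[a_gt0 a_le_c] phi_ge0 r_gt0 k_ge.
have c_gt0 : 0 < c by exact: lt_le_trans a_le_c.
have [->|phi_neq0] := eqVneq phi 0.
  by rewrite mulr0 mulr_ge0 ?exprn_ge0 // ltW.
have phi_gt0 : 0 < phi by rewrite lt_neqAle eq_sym phi_neq0.
set b := a / c.
have b_gt0 : 0 < b by exact: divr_gt0.
have cbE : c - a = c * (1 - b) by rewrite mulrBr mulr1 mulrCA divff ?mulr1 ?gt_eqF.
rewrite cbE exprMn -mulrA ler_pM2l ?exprn_gt0 //.
have exp_le : (1 - b) ^+ k <= expR (- b) ^+ k.
  apply: lerXn2r; rewrite ?nnegrE ?subr_ge0 ?expR_ge0 //.
    by rewrite ler_pdivrMr // mul1r.
  by have := expR_ge1Dx (- b).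
have expR_le : expR (- b) ^+ k <= r / phi.
  have -> : r / phi = expR (- ln (phi / r)) by rewrite expRN lnK ?invf_div // posrE divr_gt0.
  rewrite -expRM_natr ler_expR mulNr lerN2 -(ler_pdivrMl _ _ b_gt0).
  by rewrite /b invf_div.
apply: le_trans (ler_wpM2r phi_ge0 (le_trans exp_le expR_le)) _.
by rewrite mulfVK ?gt_eqF.
Qed.

Lemma gamma_mu_ge0 {R : realType} {mu : R} : 0 < mu -> 0 <= gamma_mu mu.
Proof.
move=> mu_gt0; rewrite /gamma_mu; case: ifP => [mu_le2|_]; first lra.
by rewrite invr_ge0 ltW.
Qed.

Lemma gamma_mu_lt1 {R : realType} {mu : R} : 0 < mu -> gamma_mu mu < 1.
Proof.
move=> mu_gt0; rewrite /gamma_mu; case: ifP => [mu_le2|/negbT]; first lra.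
by rewrite -ltNge => mu_gt2; rewrite invf_lt1 //; lra.
Qed.

Lemma Fstar_min {R : realType} {n : nat} {Ns : 'I_n -> nat}
    {F : 'cV[R]_(Ntot Ns) -> \bar R} {xs} :
  (forall x, (F xs <= F x)%E) -> Fstar F = F xs.
Proof.
move=> xs_min; apply/eqP; rewrite eq_le; apply/andP; split.
  by apply: ereal_inf_lbound; exists xs.
by apply: le_ereal_inf_tmp => _ [y _ <-].
Qed.

Section UCDCStep.
Context {R : realType} {n : nat} {Ns : 'I_n -> nat}.
Variable U : 'M[R]_(Ntot Ns).
Variable B : forall i : 'I_n, 'M[R]_(Ns i).
Variable f : 'cV[R]_(Ntot Ns) -> R.
Variable L : 'I_n -> R.
Variable Psi : forall i : 'I_n, 'cV[R]_(Ns i) -> \bar R.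
Variable T : forall i : 'I_n, 'cV[R]_(Ntot Ns) -> 'cV[R]_(Ns i).
Hypothesis U_perm : is_perm_mx U.
Hypothesis B_posdef : forall i, posdef (B i).
Hypothesis f_conv : convex_fun f.
Hypothesis f_diff : forall x, differentiable f x.
Hypothesis L_ge0 : forall i, 0 <= L i.
Hypothesis grad_lipschitz : forall x i (t : 'cV[R]_(Ns i)),
  bdnorm (B i) (bgrad U f i (x + blkU U i *m t) - bgrad U f i x) <= L i * bnorm (B i) t.
Hypothesis Psi_neq_ninfty : forall i t, Psi i t != -oo%E.
Hypothesis Psi_conv : forall i, convex_efun (Psi i).
Hypothesis T_min : forall i x (t : 'cV[R]_(Ns i)),
  (Vobj U f B L Psi i x (T i x) <= Vobj U f B L Psi i x t)%E.

Local Notation F := (Fobj U f Psi).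
Local Notation V := (Vobj U f B L Psi).
Local Notation step := (ucdc_step U T).
Local Notation Lnorm := (Pilot.Defs.Lnorm U B L).

Definition psi_at x j : R := fine (Psi j (blk U x j)).
Definition Fval x : R := f x + \sum_j psi_at x j.

Lemma Psi_blk_fin_num x j : (F x < +oo)%E -> Psi j (blk U x j) \is a fin_num.
Proof.
move=> Fx; rewrite fin_numE Psi_neq_ninfty /=; apply/eqP => Psi_oo.
have : (\sum_i Psi i (blk U x i) = +oo)%E.
  apply/esum_eqyP; first by move=> i _; exact: Psi_neq_ninfty.
  by exists j; rewrite mem_index_enum.
by move: Fx; rewrite /Fobj => + S; rewrite S addey // ltxx.
Qed.

Lemma FobjE {x} : (F x < +oo)%E -> F x = (Fval x)%:E.
Proof.
by move=> Fx; rewrite /Fobj /Fval EFinD EFin_sum_fine // => j _; exact: Psi_blk_fin_num.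
Qed.

Lemma Psi_blkE x j : (F x < +oo)%E -> Psi j (blk U x j) = (psi_at x j)%:E.
Proof. by move=> Fx; rewrite /psi_at fineK // Psi_blk_fin_num. Qed.

Lemma Psi_step_fin_num x i : (F x < +oo)%E -> Psi i (blk U x i + T i x) \is a fin_num.
Proof.
move=> Fx; rewrite fin_numE Psi_neq_ninfty /=; apply/eqP => Psi_oo.
have := T_min i x 0.
by rewrite /Vobj Psi_oo addey // leye_eq addr0 (Psi_blkE x i Fx) -EFinD.
Qed.

Lemma Vobj_fin_num x i : (F x < +oo)%E -> V i x (T i x) \is a fin_num.
Proof. by move=> Fx; rewrite /Vobj fin_numD /= Psi_step_fin_num. Qed.

Lemma Fobj_step_lt_pinfty x i : (F x < +oo)%E -> (F (step x i) < +oo)%E.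
Proof.
move=> Fx; rewrite /Fobj -EFin_sum_fine ?ltry // => j _.
have [->|ji] := eqVneq j i; rewrite /ucdc_step.
  by rewrite blk_move_same // Psi_step_fin_num.
by rewrite blk_move_other // Psi_blk_fin_num.
Qed.

Lemma Fobj_ucdc_lt_pinfty x w : (F x < +oo)%E -> (F (ucdc U T x w) < +oo)%E.
Proof.
by elim: w x => //= i w IH x Fx; apply/IH/Fobj_step_lt_pinfty.
Qed.

Lemma descent_block x i t :
  f (x + blkU U i *m t) <= f x + inner (bgrad U f i x) t + L i / 2 * bnorm (B i) t ^+ 2.
Proof.
apply: (le_of_slope_bound f_diff) => s /andP[s_gt0 s_lt1].
rewrite scalemxAr.
have grad_blk y : inner (grad f y) (blkU U i *m t) = inner (bgrad U f i y) t.
  by rewrite innerC inner_mulmxl innerC.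
rewrite !grad_blk -innerBl.
apply: le_trans (inner_le_bdnorm_bnorm _ _ _ (B_posdef i)) _.
apply: le_trans (ler_wpM2r (bnorm_ge0 _ t) (grad_lipschitz x i (s *: t))) _.
by rewrite bnormZ ?(ltW s_gt0) // le_eqVlt; apply/orP; left; apply/eqP; field.
Qed.

Lemma Fval_step_le x i : (F x < +oo)%E ->
  Fval (step x i) <= f x + fine (V i x (T i x)) + (\sum_j psi_at x j - psi_at x i).
Proof.
move=> Fx; rewrite /Fval /Vobj -(fineK (Psi_step_fin_num x i Fx)) -EFinD /=.
rewrite (bigD1 i) //= [X in _ <= _ + (X - _)](bigD1 i) //=.
have -> : \sum_(j < n | j != i) psi_at (step x i) j = \sum_(j < n | j != i) psi_at x j.
  by apply: eq_bigr => j ji; rewrite /psi_at /ucdc_step blk_move_other.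
rewrite /psi_at /ucdc_step blk_move_same //.
have := descent_block x i (T i x); lra.
Qed.

Lemma Lnorm_sqr x : Lnorm x ^+ 2 = \sum_i L i * bnorm (B i) (blk U x i) ^+ 2.
Proof.
by rewrite /Pilot.Defs.Lnorm sqr_sqrtr // sumr_ge0 // => i _; rewrite mulr_ge0 ?sqr_ge0.
Qed.

Lemma LnormN x : Lnorm (- x) = Lnorm x.
Proof.
rewrite /Pilot.Defs.Lnorm; congr Num.sqrt; apply: eq_bigr => i _.
by rewrite blkN /bnorm mulmxN innerNl innerNr opprK.
Qed.

Lemma Vobj_le_segment x z i l : (F x < +oo)%E -> (F z < +oo)%E -> 0 <= l <= 1 ->
  (V i x (l *: blk U (z - x) i) <=
   (l * inner (bgrad U f i x) (blk U (z - x) i)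
    + l ^+ 2 * (L i / 2 * bnorm (B i) (blk U (z - x) i) ^+ 2)
    + l * psi_at z i + (1 - l) * psi_at x i)%:E)%E.
Proof.
move=> Fx Fz l01; set d := blk U (z - x) i; rewrite /Vobj.
have -> : blk U x i + l *: d = l *: blk U z i + (1 - l) *: blk U x i.
  by rewrite /d blkD blkN scalerDr scalerN scalerBl scale1r addrCA.
apply: le_trans (leeD (lexx _) (Psi_conv i _ _ _ l01)) _.
rewrite (Psi_blkE z i Fz) (Psi_blkE x i Fx) -!EFinM -!EFinD lee_fin.
rewrite bnormZ ?(andP l01).1 // innerZr; lra.
Qed.

Lemma sum_Vobj_le x z l : (F x < +oo)%E -> (F z < +oo)%E -> 0 <= l <= 1 ->
  \sum_i fine (V i x (T i x)) <=
  l * inner (grad f x) (z - x) + l ^+ 2 / 2 * Lnorm (z - x) ^+ 2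
  + l * \sum_i psi_at z i + (1 - l) * \sum_i psi_at x i.
Proof.
move=> Fx Fz l01.
have term_le i : fine (V i x (T i x)) <=
    l * inner (bgrad U f i x) (blk U (z - x) i)
    + l ^+ 2 / 2 * (L i * bnorm (B i) (blk U (z - x) i) ^+ 2)
    + l * psi_at z i + (1 - l) * psi_at x i.
  rewrite -lee_fin fineK ?Vobj_fin_num //.
  apply: le_trans (T_min i x _) (le_trans (Vobj_le_segment _ _ _ _ Fx Fz l01) _).
  by rewrite lee_fin; lra.
apply: le_trans (ler_sum _ (fun i _ => term_le i)) _.
by rewrite !big_split /= -!mulr_sumr -(sum_inner_blk _ U_perm (grad f x)) Lnorm_sqr.
Qed.

Lemma sum_Fval_step_le x z l : (F x < +oo)%E -> (F z < +oo)%E -> 0 <= l <= 1 ->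
  \sum_i Fval (step x i) <=
  n%:R * Fval x - l * (Fval x - Fval z) + l ^+ 2 / 2 * Lnorm (z - x) ^+ 2.
Proof.
move=> Fx Fz l01.
apply: le_trans (ler_sum _ (fun i _ => Fval_step_le x i Fx)) _.
have sumV := sum_Vobj_le x z l Fx Fz l01.
have grad_le := ler_wpM2l (andP l01).1 (convex_grad_ineq f_diff f_conv x z).
rewrite !big_split /= sumrN !sumr_const card_ord /Fval.
rewrite -[_ *+ n]mulr_natl -[(\sum_j psi_at x j) *+ n]mulr_natl; lra.
Qed.

Section StronglyConvex.
Variables (mu : R) (xs : 'cV[R]_(Ntot Ns)).
Hypothesis mu_gt0 : 0 < mu.
Hypothesis F_sconv : strongly_convex_L U B L F mu.
Hypothesis xs_min : forall y, (F xs <= F y)%E.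

Lemma Fval_gap_ge0 x : (F x < +oo)%E -> 0 <= Fval x - Fval xs.
Proof.
move=> Fx; have Fxs := le_lt_trans (xs_min x) Fx.
by have := xs_min x; rewrite (FobjE Fx) (FobjE Fxs) lee_fin subr_ge0.
Qed.

Lemma Fval_gap_ge_sqr x : (F x < +oo)%E ->
  mu / 2 * Lnorm (xs - x) ^+ 2 <= Fval x - Fval xs.
Proof.
move=> Fx; have Fxs := le_lt_trans (xs_min x) Fx.
have zero_subgrad : subgrad F xs 0 by move=> z; rewrite inner0l adde0.
have := F_sconv x xs Fx Fxs 0 zero_subgrad.
rewrite inner0l add0r (FobjE Fx) (FobjE Fxs) -EFinD lee_fin -opprB LnormN; lra.
Qed.

Lemma sum_step_gap_le x : (F x < +oo)%E ->
  \sum_i (Fval (step x i) - Fval xs) <= (n%:R - (1 - gamma_mu mu)) * (Fval x - Fval xs).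
Proof.
move=> Fx; have Fxs := le_lt_trans (xs_min x) Fx.
have sqr_le := Fval_gap_ge_sqr x Fx.
rewrite sumrB sumr_const card_ord -[Fval xs *+ n]mulr_natr /gamma_mu; case: ifP => [mu_le2|_].
- have l01 : 0 <= mu / 2 <= 1 by apply/andP; split; have := mu_gt0; lra.
  have := sum_Fval_step_le x xs (mu / 2) Fx Fxs l01.
  have := ler_wpM2l (_ : 0 <= mu / 4) sqr_le; have := mu_gt0; lra.
- have := sum_Fval_step_le x xs 1 Fx Fxs; rewrite ler01 lexx => /(_ isT).
  have inv_mu_ge0 : 0 <= mu^-1 by rewrite invr_ge0 ltW.
  have := ler_wpM2l inv_mu_ge0 sqr_le.
  have -> : mu^-1 * (mu / 2 * Lnorm (xs - x) ^+ 2) = Lnorm (xs - x) ^+ 2 / 2.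
    by field; rewrite gt_eqF.
  lra.
Qed.

Lemma sum_ucdc_gap_le k x : (0 < n)%N -> (F x < +oo)%E ->
  \sum_(w : k.-tuple 'I_n) (Fval (ucdc U T x w) - Fval xs) <=
  (n%:R - (1 - gamma_mu mu)) ^+ k * (Fval x - Fval xs).
Proof.
move=> n_gt0; have rate_ge0 : 0 <= n%:R - (1 - gamma_mu mu).
  have := gamma_mu_ge0 mu_gt0; have : (1 : R) <= n%:R by rewrite ler1n.
  lra.
elim: k x => [|k IH] x Fx.
  rewrite (eq_bigr (fun _ => Fval x - Fval xs)) => [|w _]; last by rewrite tuple0.
  by rewrite sumr_const card_tuple expn0 expr0 mul1r.
rewrite sum_tuple_cons exprSr -mulrA.
apply: le_trans (_ : \sum_i (n%:R - (1 - gamma_mu mu)) ^+ k *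
                         (Fval (step x i) - Fval xs) <= _).
  by apply: ler_sum => i _; apply/IH/Fobj_step_lt_pinfty.
by rewrite -mulr_sumr ler_wpM2l ?exprn_ge0 ?sum_step_gap_le.
Qed.

End StronglyConvex.

End UCDCStep.

Theorem theorem7 (R : realType) (n : nat) (Ns : 'I_n -> nat)
  (U : 'M[R]_(Ntot Ns)) (B : forall i : 'I_n, 'M[R]_(Ns i))
  (f : 'cV[R]_(Ntot Ns) -> R) (L : 'I_n -> R)
  (Psi : forall i : 'I_n, 'cV[R]_(Ns i) -> \bar R)
  (T : forall i : 'I_n, 'cV[R]_(Ntot Ns) -> 'cV[R]_(Ns i))
  (mu eps rho : R) (x0 : 'cV[R]_(Ntot Ns)) (k : nat) :
  (0 < n)%N ->
  is_perm_mx U ->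
  (forall i, posdef (B i)) ->
  convex_fun f ->
  (forall x, differentiable f x) ->
  (forall i, 0 < L i) ->
  (forall x i (t : 'cV[R]_(Ns i)),
     bdnorm (B i) (bgrad U f i (x + blkU U i *m t) - bgrad U f i x)
       <= L i * bnorm (B i) t) ->
  (forall i, proper_fun (Psi i) /\ closed_fun (Psi i) /\ convex_efun (Psi i)) ->
  (exists xs, forall x, (Fobj U f Psi xs <= Fobj U f Psi x)%E) ->
  (forall (i : 'I_n) (x : 'cV[R]_(Ntot Ns)) (t : 'cV[R]_(Ns i)), (Vobj U f B L Psi i x (T i x) <= Vobj U f B L Psi i x t)%E) ->
  0 < mu ->
  strongly_convex_L U B L (Fobj U f Psi) mu ->
  0 < eps -> 0 < rho < 1 ->
  (Fobj U f Psi x0 < +oo)%E ->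
  n%:R / (1 - gamma_mu mu)
    * ln (fine (Fobj U f Psi x0 - Fstar (Fobj U f Psi)) / (rho * eps)) <= k%:R ->
  1 - rho <= prob_k (fun w : k.-tuple 'I_n =>
     (Fobj U f Psi (ucdc U T x0 w) - Fstar (Fobj U f Psi) <= eps%:E)%E).
Proof.
move=> n_gt0 U_perm B_pd f_conv f_diff L_gt0 grad_lip Psi_prop [xs xs_min] T_min
  mu_gt0 F_sconv eps_gt0 /andP[rho_gt0 _] Fx0 k_ge.
have Psi_noo i := (Psi_prop i).1.1.
have FE x := @FobjE _ _ _ U f Psi Psi_noo x.
pose Fv := Fval U f Psi.
have Fxs := le_lt_trans (xs_min x0) Fx0.
have Fucdc w := Fobj_ucdc_lt_pinfty U B f L Psi T U_perm Psi_noo T_min x0 w Fx0.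
rewrite (Fstar_min xs_min) (FE _ Fx0) (FE _ Fxs) -EFinB in k_ge.
have -> : (fun w : k.-tuple 'I_n =>
            (Fobj U f Psi (ucdc U T x0 w) - Fstar (Fobj U f Psi) <= eps%:E)%E)
    = (fun w => Fv (ucdc U T x0 w) - Fv xs <= eps).
  by apply/funext => w; rewrite (Fstar_min xs_min) (FE _ (Fucdc w)) (FE _ Fxs) -EFinB.
have gap_ge0 := Fval_gap_ge0 U f Psi Psi_noo xs xs_min.
apply: prob_k_markov => // [w|]; first exact: gap_ge0 (Fucdc w).
apply: le_trans (sum_ucdc_gap_le U B f L Psi T U_perm B_pd f_conv f_diff
  (fun i => ltW (L_gt0 i)) grad_lip Psi_noo (fun i => (Psi_prop i).2.2) T_min
  mu xs mu_gt0 F_sconv xs_min k x0 n_gt0 Fx0) _.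
rewrite natrX; apply: expn_contraction_le; rewrite ?mulr_gt0 ?gap_ge0 //.
have gamma_ge0 := gamma_mu_ge0 mu_gt0; have gamma_lt1 := gamma_mu_lt1 mu_gt0.
have n_ge1 : (1 : R) <= n%:R by rewrite ler1n.
by apply/andP; split; lra.
Qed.
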